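(* Let $X+_fW$, $Y$ and $Z$ be Hausdorff topological spaces, let $\pi:Y\to X$ and $\varpi:Z\to W$ be continuous maps with $\varpi$ injective, and let $f^\ast:\mathrm{Closed}(Y)\to\mathrm{Closed}(Z)$ be $f^\ast(A)=\mathrm{Cl}_Z\big(\varpi^{-1}(f(\mathrm{Cl}_X(\pi(A))))\big)$. Then $Y+_{f^\ast}Z$ is Hausdorff.
   Context: $\mathrm{Closed}(A)$ is the set of closed subsets of a space $A$; $f:\mathrm{Closed}(X)\to\mathrm{Closed}(W)$ is admissible if $f(\emptyset)=\emptyset$ and $f$ preserves finite unions ($f^\ast$ is then admissible as well); $X+_fW$ is $X\sqcup W$ with closed sets the $D$ such that $D\cap X$ is closed in $X$, $D\cap W$ closed in $W$ and $f(D\cap X)\subseteq D$. *)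

From mathcomp Require Import all_boot all_classical all_reals topology.
Set Implicit Arguments. Unset Strict Implicit. Unset Printing Implicit Defensive.
Local Open Scope classical_set_scope.

(* Closed(A) is modeled by the predicate [closed] on [set A]; a map
   Closed(X) -> Closed(W) is a function on sets required to send closed
   sets to closed sets. *)

Definition admissible (X W : topologicalType) (f : set X -> set W) : Prop :=
  [/\ (forall A, closed A -> closed (f A)),
      f set0 = set0 &
      (forall A B, closed A -> closed B -> f (A `|` B) = f A `|` f B)].

(* Closed sets of X +_f W, a topology on the disjoint union (X + W)%type. *)
Definition sum_closed (X W : topologicalType) (f : set X -> set W)
    (D : set (X + W)%type) : Prop :=
  [/\ closed [set x | D (inl x)],
      closed [set w | D (inr w)] &
      (forall w, f [set x | D (inl x)] w -> D (inr w))].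

Definition sum_open (X W : topologicalType) (f : set X -> set W)
    (U : set (X + W)%type) : Prop := sum_closed f (~` U).

Definition sum_hausdorff (X W : topologicalType) (f : set X -> set W) : Prop :=
  forall p q : (X + W)%type, p <> q ->
    exists U V : set (X + W)%type,
      [/\ sum_open f U, sum_open f V, U p, V q & U `&` V = set0].

Definition fstar (X W Y Z : topologicalType) (f : set X -> set W)
    (pi : Y -> X) (varpi : Z -> W) (A : set Y) : set Z :=
  closure (varpi @^-1` (f (closure (pi @` A)))).

From mathcomp Require Import all_boot all_classical all_reals topology.
Local Open Scope classical_set_scope.

(* The map pi + varpi from Y +_{f*} Z to X +_f W is continuous: f* is built
   so that preimages of closed sets of X +_f W are closed. Two points with
   distinct images are therefore separated by the preimages of separating open
   sets. As varpi is injective, the only other pairs are two points of Y,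
   separated inside the open subspace Y. *)

Lemma closure_sub_closed (T : topologicalType) (A C : set T) :
  closed C -> A `<=` C -> closure A `<=` C.
Proof.
by move=> cC AC; rewrite [X in _ `<=` X](closure_id _).1 //; exact: closureS.
Qed.

Lemma admissibleS {X W : topologicalType} {f : set X -> set W} {A B : set X} :
  admissible f -> closed A -> closed B -> A `<=` B -> f A `<=` f B.
Proof.
by move=> [_ _ fU] cA cB /setUidr AB; rewrite -AB fU // => w; right.
Qed.

Definition sum_fun {X W Y Z : Type} (pi : Y -> X) (varpi : Z -> W)
    (p : (Y + Z)%type) : (X + W)%type :=
  match p with inl y => inl (pi y) | inr z => inr (varpi z) end.

Definition sum_separated {X W : topologicalType} (f : set X -> set W)
    (p q : (X + W)%type) : Prop :=
  exists U V : set (X + W)%type,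
    [/\ sum_open f U, sum_open f V, U p, V q & U `&` V = set0].

Section Pullback.
Variables (X W Y Z : topologicalType) (f : set X -> set W).
Variables (pi : Y -> X) (varpi : Z -> W).
Hypotheses (f_adm : admissible f)
  (pi_cont : continuous pi) (varpi_cont : continuous varpi).

Lemma fstar_preimage_subset {C : set X} {D : set W} :
  closed C -> closed D -> f C `<=` D ->
  fstar f pi varpi (pi @^-1` C) `<=` varpi @^-1` D.
Proof.
move=> cC cD fCD; apply: closure_sub_closed.
  exact: (continuous_closedP _).1 varpi_cont _ cD.
have clC : closure (pi @` (pi @^-1` C)) `<=` C.
  exact: closure_sub_closed cC (@image_preimage_subset _ _ pi C).
have fclC := admissibleS f_adm (@closed_closure X _) cC clC.
by move=> z /fclC /fCD.
Qed.

Lemma sum_closed_preimage (D : set (X + W)%type) :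
  sum_closed f D -> sum_closed (fstar f pi varpi) (sum_fun pi varpi @^-1` D).
Proof.
move=> [cX cW fXW]; split.
- exact: (continuous_closedP _).1 pi_cont _ cX.
- exact: (continuous_closedP _).1 varpi_cont _ cW.
- exact: (fstar_preimage_subset cX cW fXW).
Qed.

Lemma sum_open_preimage (U : set (X + W)%type) :
  sum_open f U -> sum_open (fstar f pi varpi) (sum_fun pi varpi @^-1` U).
Proof. by rewrite /sum_open preimage_setC; exact: sum_closed_preimage. Qed.

Lemma sum_separated_preimage (p q : (Y + Z)%type) :
  sum_separated f (sum_fun pi varpi p) (sum_fun pi varpi q) ->
  sum_separated (fstar f pi varpi) p q.
Proof.
move=> [U [V [oU oV Up Vq UV]]].
exists (sum_fun pi varpi @^-1` U), (sum_fun pi varpi @^-1` V).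
split=> //; try exact: sum_open_preimage.
by rewrite -preimage_setI UV preimage_set0.
Qed.

End Pullback.

Lemma sum_open_inl (Y Z : topologicalType) (g : set Y -> set Z) (A : set Y) :
  open A -> sum_open g (inl @` A).
Proof.
move=> oA; split.
- rewrite [X in closed X](_ : _ = ~` A) ?closedC // funeqE => y.
  rewrite propeqE; split=> nA Ay; apply: nA; first by exists y.
  by case: Ay => y' Ay' [<-].
- rewrite [X in closed X](_ : _ = setT); first exact: closedT.
  by rewrite funeqE => z; rewrite propeqE; split=> // _ [].
- by move=> z _ [].
Qed.

Lemma sum_separated_inl (Y Z : topologicalType) (g : set Y -> set Z)
    (y1 y2 : Y) :
  hausdorff_space Y -> y1 <> y2 -> sum_separated g (inl y1) (inl y2).
Proof.
rewrite open_hausdorff => hY /eqP/hY [[A B] /=].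
rewrite !in_setE => -[y1A y2B] [oA oB AB].
exists (inl @` A), (inl @` B).
split; [exact: sum_open_inl..|by exists y1|by exists y2|].
rewrite -subset0 => _ [[y Ay <-] [y' By' [yy']]].
suff : (A `&` B) y by rewrite AB.
by split; last rewrite -yy'.
Qed.

Theorem mainTheorem19 (X W Y Z : topologicalType) (f : set X -> set W)
    (pi : Y -> X) (varpi : Z -> W) :
  admissible f ->
  sum_hausdorff f ->
  hausdorff_space Y -> hausdorff_space Z ->
  continuous pi -> continuous varpi -> injective varpi ->
  sum_hausdorff (fstar f pi varpi).
Proof.
move=> f_adm f_T2 Y_T2 _ pi_cont varpi_cont varpi_inj p q.
case: p q => [y1|z1] [y2|z2] pq.
- by apply: sum_separated_inl => // y12; apply: pq; rewrite y12.
all: apply: sum_separated_preimage => //; apply: f_T2 => //=.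
by move=> [/varpi_inj z12]; apply: pq; rewrite z12.
Qed.
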